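(* Let $0<q\leq 1$, let $D\in\mathbb{R}^{n\times d}$ be a frame with frame bounds $0<\mathcal{L}\leq\mathcal{U}<\infty$, $\kappa=\mathcal{U}/\mathcal{L}$, let $A\in\mathbb{R}^{m\times n}$, and let $s<a$ be positive integers. Assume $A$ satisfies the $(D^{\dagger},q)$-RIP of order $s+a$ (with $(D^\dagger,q)$-RIP constants $\delta_a$ and $\delta_{s+a}<1$), and let $\Delta=\frac{1+\delta_a}{1-\delta_{s+a}}$. Let $h\in\mathbb{R}^n$ be arbitrary and let $T=T_0,T_1,T_2,\dots$ and $T_{01}=T_0\cup T_1$ be the index sets associated with $D^*h$ as described in the context. Then $$\|DD_{T_{01}}^*h\|_2^2\leq\kappa\,\mathcal{U}\,\Delta^{2/q}a^{1-2/q}\left(\|D_{T^c}^*h\|_q^q+\frac{\mathcal{L}^{q/2}a^{1-q/2}\|Ah\|_q^q}{1+\delta_a}\right)^{2/q}.$$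
   Context: $D$ is a frame with frame bounds $\mathcal{L},\mathcal{U}$ if $\mathcal{L}\|f\|_2^2\leq\|D^*f\|_2^2\leq\mathcal{U}\|f\|_2^2$ for all $f\in\mathbb{R}^n$; $D^{\dagger}=(DD^* )^{-1}D$. $A$ obeys the $(D^\dagger,q)$-RIP of order $k$ with constant $\delta\in[0,1)$ if $(1-\delta)\|D^\dagger v\|_2^q\leq\|AD^\dagger v\|_q^q\leq(1+\delta)\|D^\dagger v\|_2^q$ for all $v\in\mathbb{R}^d$ with at most $k$ nonzero entries; $\delta_k$ is the smallest such $\delta$. Index sets: write $D^*h=(x_1,\dots,x_d)^T$ and, after reordering indices, assume $|x_1|\geq|x_2|\geq\cdots\geq|x_d|$; set $T=T_0=\{1,\dots,s\}$, $T_1=\{s+1,\dots,s+a\}$, $T_i=\{s+(i-1)a+1,\dots,s+ia\}$ for $i\geq 2$ (the last one possibly of size less than $a$), $T_{01}=T_0\cup T_1$, and $T^c=[d]\setminus T$. For $S\subset[d]$, $D_S$ is the $n\times d$ matrix obtained from $D$ by setting the columns indexed outside $S$ to zero, so $D_S^*h$ is $D^*h$ restricted to $S$. *)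

From HB Require Import structures.
From mathcomp Require Import all_boot all_order all_algebra all_fingroup.
From mathcomp Require Import all_classical all_reals all_analysis.
Set Implicit Arguments. Unset Strict Implicit. Unset Printing Implicit Defensive.
Import Order.TTheory GRing.Theory Num.Theory.
Local Open Scope ring_scope.

Section Defs.
Variable R : realType.

Definition norm2 (n : nat) (v : 'cV[R]_n) : R := Num.sqrt (\sum_i (v i 0) ^+ 2).

Definition normqq (n : nat) (q : R) (v : 'cV[R]_n) : R := \sum_i `|v i 0| `^ q.

Definition is_frame (n d : nat) (D : 'M[R]_(n, d)) (L U : R) : Prop :=
  forall f : 'cV[R]_n,
    L * norm2 f ^+ 2 <= norm2 (D^T *m f) ^+ 2 <= U * norm2 f ^+ 2.

Definition Ddag (n d : nat) (D : 'M[R]_(n, d)) : 'M[R]_(n, d) :=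
  invmx (D *m D^T) *m D.

Definition Dsub (n d : nat) (D : 'M[R]_(n, d)) (S : {set 'I_d}) : 'M[R]_(n, d) :=
  \matrix_(i, j) (if j \in S then D i j else 0).

Definition sparse (d k : nat) (v : 'cV[R]_d) : Prop :=
  (#|[set i | v i ord0 != 0%R]| <= k)%N.

Definition Dq_RIP (m n d : nat) (A : 'M[R]_(m, n)) (D : 'M[R]_(n, d)) (q : R)
    (k : nat) (delta : R) : Prop :=
  0 <= delta < 1 /\
  forall v : 'cV[R]_d, sparse k v ->
    (1 - delta) * norm2 (Ddag D *m v) `^ q <= normqq q (A *m (Ddag D *m v)) <=
    (1 + delta) * norm2 (Ddag D *m v) `^ q.

Definition Dq_RIP_const (m n d : nat) (A : 'M[R]_(m, n)) (D : 'M[R]_(n, d)) (q : R)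
    (k : nat) (delta : R) : Prop :=
  Dq_RIP A D q k delta /\ forall delta', Dq_RIP A D q k delta' -> delta <= delta'.

Definition sorting_perm (d : nat) (x : 'cV[R]_d) (sigma : 'S_d) : Prop :=
  forall i j : 'I_d, (i <= j)%N -> `|x (sigma j) 0| <= `|x (sigma i) 0|.

Definition T0 (d s : nat) (sigma : 'S_d) : {set 'I_d} :=
  [set sigma i | i : 'I_d & (i < s)%N].
Definition T1 (d s a : nat) (sigma : 'S_d) : {set 'I_d} :=
  [set sigma i | i : 'I_d & (s <= i < s + a)%N].

End Defs.

From HB Require Import structures.
From mathcomp Require Import all_boot all_order all_algebra all_fingroup.
From mathcomp Require Import all_classical all_reals all_analysis.
From mathcomp Require Import ring lra zify.
Set Implicit Arguments. Unset Strict Implicit. Unset Printing Implicit Defensive.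
Import Order.TTheory GRing.Theory Num.Theory.
Local Open Scope ring_scope.

(* Write x = D^* h and cut its entries, in decreasing order of magnitude, into T_01 and
   blocks T_2, T_3, ... of size a.  The frame bounds give
   ||D D_T01^* h||_2 <= U ||D^dagger x_T01||_2, and the lower RIP bound controls
   ||D^dagger x_T01||_2^q by ||A D^dagger x_T01||_q^q.  As D^dagger x = h, this vector is
   A h - sum_j A D^dagger x_Tj; the q-triangle inequality (q <= 1), the upper RIP bound,
   L ||D^dagger v||_2^2 <= ||v||_2^2 and the shifting estimate
   ||x_T(j+1)||_2^q <= a^(q/2-1) ||x_Tj||_q^q (each entry on T_(j+1) is dominated by
   every entry on T_j) bound it by ||A h||_q^q and ||x_T^c||_q^q.  Raising to the
   power 2/q gives the claim. *)

Section RealPowers.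
Variable R : realType.
Implicit Types x y p q r : R.

Lemma powR_ratio x p r : r != 0 -> (x `^ r) `^ (p / r) = x `^ p.
Proof. by move=> r0; rewrite -powRrM mulrCA divff ?mulr1. Qed.

Lemma powR_subadd x y q : 0 < q -> q <= 1 -> 0 <= x -> 0 <= y ->
  (x + y) `^ q <= x `^ q + y `^ q.
Proof.
move=> q_gt0 q_le1 x_ge0 y_ge0; set z := x + y.
have [z0|z_neq0] := eqVneq z 0.
  by rewrite z0 powR0 ?gt_eqF // addr_ge0 ?powR_ge0.
have z_gt0 : 0 < z by rewrite lt_neqAle eq_sym z_neq0 addr_ge0.
(* t / z <= (t / z) ^ q for 0 <= t <= z; summing over t = x, y gives the claim *)
have frac t : 0 <= t <= z -> t / z * z `^ q <= t `^ q.
  case/andP=> t_ge0 t_le_z; have [->|t_neq0] := eqVneq t 0.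
    by rewrite !mul0r powR_ge0.
  have tz_ge0 : 0 <= t / z by rewrite divr_ge0 // ltW.
  rewrite -{2}(divfK z_neq0 t) (powRM _ tz_ge0 (ltW z_gt0)).
  apply: ler_wpM2r; first exact: powR_ge0.
  apply: ger1_powR q_le1; rewrite ler_pdivrMr // mul1r t_le_z andbT.
  by apply: divr_gt0 => //; rewrite lt_neqAle eq_sym t_neq0.
have fx : x / z * z `^ q <= x `^ q by apply: frac; rewrite x_ge0 lerDl.
have fy : y / z * z `^ q <= y `^ q by apply: frac; rewrite y_ge0 lerDr.
have : x / z * z `^ q + y / z * z `^ q = z `^ q.
  by rewrite -!mulrDl divff // mul1r.
lra.
Qed.

End RealPowers.

Section Dot.
Variable R : realType.

Definition dot k (u v : 'cV[R]_k) : R := (u^T *m v) 0 0.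

Variable k : nat.
Implicit Types u v : 'cV[R]_k.

Lemma dotE u v : dot u v = \sum_i u i 0 * v i 0.
Proof. by rewrite /dot mxE; apply: eq_bigr => i _; rewrite mxE. Qed.

Lemma dotC u v : dot u v = dot v u.
Proof. by rewrite !dotE; apply: eq_bigr => i _; rewrite mulrC. Qed.

Lemma dot_mulmx l (M : 'M[R]_(k, l)) u (v : 'cV[R]_l) : dot u (M *m v) = dot (M^T *m u) v.
Proof. by rewrite /dot trmx_mul trmxK mulmxA. Qed.

Lemma dotr0 u : dot u 0 = 0.
Proof. by rewrite /dot mulmx0 mxE. Qed.

Lemma norm2_sqr v : norm2 v ^+ 2 = dot v v.
Proof.
rewrite sqr_sqrtr ?dotE; last by apply: sumr_ge0 => i _; exact: sqr_ge0.
by apply: eq_bigr => i _; rewrite expr2.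
Qed.

Lemma norm2_ge0 v : 0 <= norm2 v.
Proof. exact: sqrtr_ge0. Qed.

Lemma dot_self_ge0 v : 0 <= dot v v.
Proof. by rewrite -norm2_sqr sqr_ge0. Qed.

Lemma dot_self_eq0 v : dot v v = 0 -> v = 0.
Proof.
rewrite dotE => /eqP; rewrite psumr_eq0 => [/allP v0|i _]; last first.
  by rewrite -expr2 sqr_ge0.
apply/matrixP => i j; rewrite (ord1 j) mxE; apply/eqP.
by move: (v0 i (mem_index_enum _)); rewrite /= -expr2 sqrf_eq0.
Qed.

Lemma dot_AMGM (c : R) u v : 2 * c * dot u v <= c ^+ 2 * dot u u + dot v v.
Proof.
rewrite !dotE !mulr_sumr -big_split /= ler_sum // => i _.
have := sqr_ge0 (c * u i 0 - v i 0); nra.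
Qed.

Lemma norm2_powR v p : norm2 v `^ p = dot v v `^ (p / 2).
Proof. by rewrite -norm2_sqr -powR_mulrn ?norm2_ge0 // powR_ratio. Qed.

End Dot.

Section Frame.
Variables (R : realType) (n d : nat) (D : 'M[R]_(n, d)) (L U : R).
Hypotheses (L_gt0 : 0 < L) (frameD : is_frame D L U).
Implicit Types (f h : 'cV[R]_n) (v w z : 'cV[R]_d).

Lemma frame_dot f : L * dot f f <= dot (D^T *m f) (D^T *m f) <= U * dot f f.
Proof. by rewrite -!norm2_sqr; exact: frameD. Qed.

Lemma frame_unitmx : D *m D^T \in unitmx.
Proof.
rewrite unitmxE unitfE; apply/negP => /det0P[v v_neq0 vDD].
have DDv : D *m D^T *m v^T = 0.
  by rewrite -[D *m D^T]trmxK trmx_mul trmxK -trmx_mul vDD trmx0.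
have /andP[+ _] := frame_dot v^T.
rewrite -dot_mulmx mulmxA DDv dotr0 => Lv_le0.
have /dot_self_eq0 /(congr1 trmx) : dot v^T v^T = 0.
  by apply/eqP; rewrite eq_le dot_self_ge0 andbT -(pmulr_rle0 _ L_gt0).
by rewrite trmxK trmx0 => v0; rewrite v0 eqxx in v_neq0.
Qed.

Lemma Ddag_mul_trmx h : Ddag D *m (D^T *m h) = h.
Proof. by rewrite /Ddag -mulmxA (mulmxA D) mulKmx // frame_unitmx. Qed.

Lemma mulmx_Ddag w : D *m D^T *m (Ddag D *m w) = D *m w.
Proof. by rewrite /Ddag !mulmxA mulmxV ?mul1mx // frame_unitmx. Qed.

(* Both bounds below are [dot_AMGM] with a weight for which the cross term is the
   quantity being bounded. *)
Lemma dot_mulmx_le z : 0 < U -> dot (D *m z) (D *m z) <= U * dot z z.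
Proof.
move=> U_gt0; set f := D *m z.
have ff : dot f f = dot z (D^T *m f) by rewrite {2}/f dot_mulmx dotC.
have := dot_AMGM U z (D^T *m f); have /andP[_] := frame_dot f.
rewrite -ff => DTf_le AMGM.
by rewrite -(ler_pM2l U_gt0); nra.
Qed.

Lemma dot_Ddag_le v : L * dot (Ddag D *m v) (Ddag D *m v) <= dot v v.
Proof.
set y := Ddag D *m v.
have yy : dot (D^T *m y) (D^T *m y) = dot (D^T *m y) v.
  by rewrite -dot_mulmx mulmxA mulmx_Ddag dot_mulmx.
have := dot_AMGM 1 (D^T *m y) v; have /andP[+ _] := frame_dot y.
rewrite -yy expr1n mul1r mulr1; lra.
Qed.

Lemma norm2_mulmx_le_Ddag w : 0 < U ->
  norm2 (D *m w) ^+ 2 <= U ^+ 2 * norm2 (Ddag D *m w) ^+ 2.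
Proof.
move=> U_gt0; rewrite !norm2_sqr -mulmx_Ddag -mulmxA expr2 -mulrA.
apply: le_trans (dot_mulmx_le _ U_gt0) _; rewrite ler_pM2l //.
by have /andP[_] := frame_dot (Ddag D *m w).
Qed.

Lemma norm2_Ddag_powR_le q v : 0 < q ->
  L `^ (q / 2) * norm2 (Ddag D *m v) `^ q <= norm2 v `^ q.
Proof.
move=> q_gt0; rewrite !norm2_powR -powRM ?dot_self_ge0 ?(ltW L_gt0) //.
apply: ge0_ler_powR; rewrite ?nnegrE ?mulr_ge0 ?dot_self_ge0 ?dot_Ddag_le //.
all: exact: ltW.
Qed.

End Frame.

Section QNorm.
Variables (R : realType) (k : nat) (q : R).
Hypotheses (q_gt0 : 0 < q) (q_le1 : q <= 1).
Implicit Types u v : 'cV[R]_k.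

Lemma normqq_ge0 v : 0 <= normqq q v.
Proof. by apply: sumr_ge0 => i _; exact: powR_ge0. Qed.

Lemma normqq0 : normqq q (0 : 'cV[R]_k) = 0.
Proof. by rewrite /normqq big1 // => i _; rewrite mxE normr0 powR0 // gt_eqF. Qed.

Lemma normqqN v : normqq q (- v) = normqq q v.
Proof. by apply: eq_bigr => i _; rewrite mxE normrN. Qed.

Lemma normqqD u v : normqq q (u + v) <= normqq q u + normqq q v.
Proof.
rewrite /normqq -big_split /= ler_sum // => i _; rewrite mxE.
apply: le_trans (powR_subadd q_gt0 q_le1 (normr_ge0 _) (normr_ge0 _)).
by apply: ge0_ler_powR; rewrite ?nnegrE ?addr_ge0 ?ler_normD // ltW.
Qed.

Lemma normqq_sum I (r : seq I) (P : pred I) (F : I -> 'cV[R]_k) :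
  normqq q (\sum_(i <- r | P i) F i) <= \sum_(i <- r | P i) normqq q (F i).
Proof.
elim/big_rec2: _ => [|i y Fy _ IH]; first by rewrite normqq0.
by apply: le_trans (normqqD _ _) _; rewrite lerD2l.
Qed.

End QNorm.

Section Restrict.
Variables (R : realType) (d : nat).
Implicit Types (S : {set 'I_d}) (x : 'cV[R]_d).

Definition restrict S x : 'cV[R]_d := \col_i (if i \in S then x i 0 else 0).

Lemma trmx_Dsub_mulmx n (D : 'M[R]_(n, d)) S (h : 'cV[R]_n) :
  (Dsub D S)^T *m h = restrict S (D^T *m h).
Proof.
apply/matrixP => i j; rewrite (ord1 j) !mxE.
case: ifP => iS; first by apply: eq_bigr => l _; rewrite !mxE iS.
by rewrite big1 // => l _; rewrite !mxE iS mul0r.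
Qed.

Lemma sparse_restrict k S x : (#|S| <= k)%N -> sparse k (restrict S x).
Proof.
move=> Sk; apply: leq_trans Sk; apply: subset_leq_card.
by apply/fintype.subsetP => i; rewrite inE mxE; case: ifP => // _; rewrite eqxx.
Qed.

Lemma normqq_restrict q S x : q != 0 ->
  normqq q (restrict S x) = \sum_(i in S) `|x i 0| `^ q.
Proof.
move=> q_neq0; rewrite /normqq [RHS]big_mkcond /=; apply: eq_bigr => i _.
by rewrite mxE; case: ifP; rewrite ?normr0 ?powR0.
Qed.

End Restrict.

Lemma norm2_powR_le_sparse (R : realType) k l (q M : R) (v : 'cV[R]_l) :
  0 < q -> 0 <= M -> sparse k v -> (forall i, `|v i 0| `^ q <= M) ->
  norm2 v `^ q <= k%:R `^ (q / 2) * M.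
Proof.
move=> q_gt0 M_ge0 v_sparse vM; set S := [set i | v i 0 != 0].
have q_neq0 : q != 0 by rewrite gt_eqF.
have sq i : v i 0 ^+ 2 <= M `^ (2 / q).
  rewrite -real_normK ?num_real // -powR_mulrn ?normr_ge0 // -(powR_ratio _ _ q_neq0).
  by apply: ge0_ler_powR; rewrite ?nnegrE ?powR_ge0 // divr_ge0 // ltW.
have vv : dot v v <= k%:R * M `^ (2 / q).
  rewrite dotE (bigID (mem S)) /= [X in _ + X]big1 ?addr0 => [|i]; last first.
    by rewrite inE negbK => /eqP ->; rewrite mulr0.
  apply: (@le_trans _ _ (\sum_(i in S) M `^ (2 / q))).
    by apply: ler_sum => i _; rewrite -expr2.
  rewrite sumr_const -[X in X <= _]mulr_natl; apply: ler_wpM2r; first exact: powR_ge0.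
  by rewrite ler_nat.
rewrite norm2_powR; apply: le_trans (ge0_ler_powR _ _ _ vv) _.
- by rewrite divr_ge0 ?ltW.
- exact: dot_self_ge0.
- by rewrite nnegrE mulr_ge0 ?powR_ge0.
rewrite powRM ?powR_ge0 // -powRrM.
have -> : 2 / q * (q / 2) = 1 by field; rewrite gt_eqF.
by rewrite powRr1.
Qed.

Lemma sqr_le_of_powR_le (R : realType) (q L N Delta b K : R) :
  0 < q -> 0 < L -> 0 <= N -> 0 <= Delta -> 0 <= K ->
  L `^ (q / 2) * N `^ q <= Delta * b `^ (q / 2 - 1) * K ->
  N ^+ 2 <= L^-1 * (Delta `^ (2 / q) * b `^ (1 - 2 / q) * K `^ (2 / q)).
Proof.
move=> q_gt0 L_gt0 N_ge0 Delta_ge0 K_ge0 NK; have q_neq0 : q != 0 by rewrite gt_eqF.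
have two_q_ge0 : 0 <= 2 / q by rewrite divr_ge0 ?ltW.
have lhs_ge0 : L `^ (q / 2) * N `^ q \is Num.nneg.
  by rewrite nnegrE; apply: mulr_ge0; exact: powR_ge0.
have rhs_ge0 : Delta * b `^ (q / 2 - 1) * K \is Num.nneg.
  by rewrite nnegrE; apply: mulr_ge0 => //; apply: mulr_ge0 => //; exact: powR_ge0.
have := ge0_ler_powR two_q_ge0 lhs_ge0 rhs_ge0 NK.
rewrite (powRM _ (powR_ge0 _ _) (powR_ge0 _ _)) (powRM _ _ K_ge0); last first.
  by apply: mulr_ge0 => //; exact: powR_ge0.
rewrite (powRM _ Delta_ge0 (powR_ge0 _ _)) (powR_ratio N 2 q_neq0) powR_mulrn //.
rewrite -!powRrM (_ : q / 2 * (2 / q) = 1) ?(powRr1 (ltW L_gt0)); last by field.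
rewrite (_ : (q / 2 - 1) * (2 / q) = 1 - 2 / q); last by field.
by rewrite ler_pdivlMl.
Qed.

Lemma card_le_interval (T : finType) (f : T -> nat) (A : {set T}) lo n :
  injective f -> {in A, forall t, lo <= f t < lo + n}%N -> (#|A| <= n)%N.
Proof.
move=> f_inj fA; rewrite cardE -(size_map f) -(size_iota lo n).
apply: uniq_leq_size; first by rewrite (map_inj_uniq f_inj) enum_uniq.
by move=> _ /mapP[t tA ->]; rewrite mem_iota fA // -mem_enum.
Qed.

Lemma card_ge_interval (T : finType) (f : T -> nat) (A : {set T}) lo n :
  (forall m, lo <= m < lo + n -> exists2 t, t \in A & f t = m)%N -> (n <= #|A|)%N.
Proof.
move=> fA; rewrite cardE -(size_map f) -[n](size_iota lo).
apply: uniq_leq_size (iota_uniq _ _) _ => m; rewrite mem_iota => /fA[t tA <-].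
by apply: map_f; rewrite mem_enum.
Qed.

Definition rank d (sigma : 'S_d) (i : 'I_d) : nat := (sigma^-1)%g i.

(* [Tblock s a sigma k] is the paper's T_(k+1); in particular T_1 = Tblock s a sigma 0. *)
Definition Tblock d s a (sigma : 'S_d) (k : nat) : {set 'I_d} :=
  [set i | (s <= rank sigma i) && ((rank sigma i - s) %/ a == k)]%N.

Section Blocks.
Variables (d s a : nat) (sigma : 'S_d).
Local Open Scope nat_scope.
Hypothesis a_gt0 : 0 < a.
Local Notation rk := (rank sigma).
Local Notation B := (Tblock s a sigma).

Lemma rank_inj : injective rk.
Proof. by move=> i j /val_inj /perm_inj. Qed.

Lemma rankK p : rk (sigma p) = p.
Proof. by rewrite /rank permK. Qed.

Lemma mem_Tblock i k : (i \in B k) = (s <= rk i) && ((rk i - s) %/ a == k).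
Proof. by rewrite inE. Qed.

Lemma mem_T0 i : (i \in T0 s sigma) = (rk i < s).
Proof.
apply/imsetP/idP => [[p]|i_lt]; first by rewrite inE => p_lt ->; rewrite rankK.
by exists ((sigma^-1)%g i); rewrite ?inE ?permKV.
Qed.

Lemma mem_T1 i : (i \in T1 s a sigma) = (i \in B 0).
Proof.
have -> : (i \in T1 s a sigma) = (s <= rk i < s + a).
  apply/imsetP/idP => [[p]|i_in]; first by rewrite inE => p_in ->; rewrite rankK.
  by exists ((sigma^-1)%g i); rewrite ?inE ?permKV.
rewrite mem_Tblock; move: (ltn_divLR (rk i - s) 1 a_gt0); rewrite mul1n.
by move: ((rk i - s) %/ a) => l; lia.
Qed.

Lemma card_Tblock k : #|B k| <= a.
Proof.
apply: (card_le_interval (lo := s + k * a) rank_inj) => i.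
rewrite mem_Tblock => /andP[s_le /eqP <-].
move: (leq_trunc_div (rk i - s) a) (ltn_ceil (rk i - s) a_gt0).
rewrite mulSn; move: ((rk i - s) %/ a) => l; lia.
Qed.

Lemma card_T01 : #|T0 s sigma :|: T1 s a sigma| <= s + a.
Proof.
apply: leq_trans (leq_card_setU _ _).1 _; apply: leq_add.
  by apply: (card_le_interval (lo := 0) rank_inj) => i; rewrite mem_T0.
by rewrite (eq_card mem_T1) card_Tblock.
Qed.

Local Open Scope ring_scope.

Lemma sum_Tblock (V : nmodType) lo hi i (c : V) :
  \sum_(lo <= k < hi) (if i \in B k then c else 0) =
  if (s <= rk i)%N && (lo <= (rk i - s) %/ a < hi)%N then c else 0.
Proof.
rewrite -big_mkcond /=; under eq_bigl => k do rewrite mem_Tblock.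
case: (s <= rk i)%N => /=; last by rewrite big_pred0_eq.
by under eq_bigl => k do rewrite eq_sym; rewrite big_nat1_eq.
Qed.

Lemma restrict_T01_Tblock (R : realType) (x : 'cV[R]_d) :
  x = restrict (T0 s sigma :|: T1 s a sigma) x + \sum_(0 <= k < d) restrict (B k.+1) x.
Proof.
apply/matrixP => i j; rewrite (ord1 j) !mxE summxE.
under eq_bigr => k _ do rewrite mxE.
rewrite -(big_add1 _ _ 0 d.+1 xpredT (fun k => if i \in B k then x i 0 else 0)).
rewrite sum_Tblock inE mem_T0 mem_T1 mem_Tblock.
have l_lt : ((rk i - s) %/ a < d.+1)%N.
  by move: (leq_div (rk i - s)%N a) (ltn_ord ((sigma^-1)%g i)); rewrite /rank; lia.
have [_|_] := ltnP (rk i) s; first by rewrite addr0.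
rewrite l_lt andbT lt0n; case: eqP => _; by rewrite ?addr0 ?add0r.
Qed.

Lemma normqq_Tblock_sum (R : realType) (q : R) (x : 'cV[R]_d) : q != 0 ->
  \sum_(0 <= k < d) normqq q (restrict (B k) x) = normqq q (restrict (~: T0 s sigma) x).
Proof.
move=> q_neq0; under eq_bigr => k _ do rewrite normqq_restrict // big_mkcond.
rewrite exchange_big normqq_restrict // [RHS]big_mkcond; apply: eq_bigr => i _.
rewrite sum_Tblock inE mem_T0 -leqNgt.
have l_lt : ((rk i - s) %/ a < d)%N.
  by move: (leq_div (rk i - s)%N a) (ltn_ord ((sigma^-1)%g i)); rewrite /rank; lia.
by rewrite leq0n l_lt !andbT.
Qed.

Variables (R : realType) (x : 'cV[R]_d).
Hypothesis x_sorted : sorting_perm x sigma.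

Lemma Tblock_sorted k i j : i \in B k.+1 -> j \in B k -> `|x i 0| <= `|x j 0|.
Proof.
rewrite !mem_Tblock => /andP[_ /eqP ki] /andP[_ /eqP kj].
have ji : (rk j <= rk i)%N.
  rewrite leqNgt; apply/negP => /ltnW /(leq_sub2r s) /(leq_div2r a).
  by rewrite ki kj ltnn.
by have := x_sorted ji; rewrite !permKV.
Qed.

Lemma card_Tblock_ge k i : i \in B k.+1 -> (a <= #|B k|)%N.
Proof.
rewrite mem_Tblock => /andP[s_le /eqP ki].
apply: (card_ge_interval (f := rk) (lo := s + k * a)) => l /andP[lo_l l_hi].
have l_lt_d : (l < d)%N.
  move: (leq_trunc_div (rk i - s)%N a) (ltn_ord ((sigma^-1)%g i)).
  by rewrite ki mulSn /rank; lia.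
exists (sigma (Ordinal l_lt_d)); last by rewrite rankK.
rewrite mem_Tblock rankK /=.
have -> : (l - s = k * a + (l - s - k * a))%N by lia.
by rewrite divnMDl // divn_small ?addn0 ?eqxx; lia.
Qed.

Lemma Tblock_mean_le q k i : 0 < q -> i \in B k.+1 ->
  a%:R * `|x i 0| `^ q <= normqq q (restrict (B k) x).
Proof.
move=> q_gt0 iB; rewrite normqq_restrict ?gt_eqF //.
apply: (@le_trans _ _ (#|B k|%:R * `|x i 0| `^ q)).
  by apply: ler_wpM2r; [exact: powR_ge0 | rewrite ler_nat (card_Tblock_ge iB)].
rewrite mulr_natl -sumr_const; apply: ler_sum => j jB.
apply: ge0_ler_powR; rewrite ?nnegrE ?normr_ge0 ?(ltW q_gt0) //.
exact: Tblock_sorted iB jB.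
Qed.

Lemma norm2_Tblock_succ_le q k : 0 < q ->
  norm2 (restrict (B k.+1) x) `^ q <= a%:R `^ (q / 2 - 1) * normqq q (restrict (B k) x).
Proof.
move=> q_gt0; have a_pos : 0 < a%:R :> R by rewrite ltr0n.
have M_ge0 : 0 <= normqq q (restrict (B k) x) / a%:R.
  by rewrite divr_ge0 ?normqq_ge0 ?ler0n.
rewrite powRB ?pnatr_eq0 -?lt0n ?a_gt0 ?implybT // powRr1 ?ler0n // mulrAC -mulrA.
apply: norm2_powR_le_sparse => //; first exact: sparse_restrict (card_Tblock _).
move=> j; rewrite mxE; case: ifP => [jB|_].
  by rewrite ler_pdivlMr // mulrC Tblock_mean_le.
by rewrite normr0 powR0 ?gt_eqF.
Qed.

End Blocks.

Lemma normqq_ADdag_T01_le (R : realType) m n d (q L U delta : R)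
    (D : 'M[R]_(n, d)) (A : 'M[R]_(m, n)) s a (sigma : 'S_d) (h : 'cV[R]_n) :
  0 < q -> q <= 1 -> 0 < L -> is_frame D L U -> (0 < a)%N ->
  Dq_RIP A D q a delta -> sorting_perm (D^T *m h) sigma ->
  L `^ (q / 2) * normqq q (A *m (Ddag D *m restrict (T0 s sigma :|: T1 s a sigma) (D^T *m h)))
  <= L `^ (q / 2) * normqq q (A *m h) +
     (1 + delta) * a%:R `^ (q / 2 - 1) * normqq q (restrict (~: T0 s sigma) (D^T *m h)).
Proof.
move=> q_gt0 q_le1 L_gt0 frameD a_gt0 [/andP[delta_ge0 _] RIPa] sorted.
set x := D^T *m h; set w := restrict _ x.
pose y k := A *m (Ddag D *m restrict (Tblock s a sigma k.+1) x).
have Lq_ge0 : 0 <= L `^ (q / 2) := powR_ge0 _ _.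
have Ah : A *m (Ddag D *m w) = A *m h - \sum_(0 <= k < d) y k.
  rewrite -{1}(Ddag_mul_trmx L_gt0 frameD h) -/x {1}(restrict_T01_Tblock s sigma a_gt0 x).
  by rewrite !mulmxDr !mulmx_sumr addrK.
have y_le k : L `^ (q / 2) * normqq q (y k) <=
    (1 + delta) * a%:R `^ (q / 2 - 1) * normqq q (restrict (Tblock s a sigma k) x).
  have /andP[_ RIPk] := RIPa _ (sparse_restrict x (card_Tblock s sigma a_gt0 k.+1)).
  apply: le_trans (ler_wpM2l Lq_ge0 RIPk) _.
  rewrite mulrCA -mulrA ler_wpM2l ?addr_ge0 //.
  apply: le_trans (norm2_Ddag_powR_le L_gt0 frameD _ q_gt0) _.
  exact: norm2_Tblock_succ_le.
rewrite -(normqq_Tblock_sum _ _ a_gt0) ?gt_eqF // Ah.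
apply: le_trans (ler_wpM2l Lq_ge0 (normqqD q_gt0 q_le1 _ _)) _.
rewrite normqqN mulrDr lerD2l.
apply: le_trans (ler_wpM2l Lq_ge0 (normqq_sum q_gt0 q_le1 _ _ _)) _.
by rewrite mulr_sumr [in X in _ <= X]mulr_sumr; apply: ler_sum.
Qed.

Lemma norm2_Ddag_T01_le (R : realType) m n d (q L U delta_a delta_sa : R)
    (D : 'M[R]_(n, d)) (A : 'M[R]_(m, n)) s a (sigma : 'S_d) (h : 'cV[R]_n) :
  0 < q -> q <= 1 -> 0 < L -> is_frame D L U -> (0 < a)%N ->
  Dq_RIP A D q (s + a) delta_sa -> Dq_RIP A D q a delta_a -> delta_sa < 1 ->
  sorting_perm (D^T *m h) sigma ->
  norm2 (Ddag D *m restrict (T0 s sigma :|: T1 s a sigma) (D^T *m h)) ^+ 2 <=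
  L^-1 * (((1 + delta_a) / (1 - delta_sa)) `^ (2 / q) * a%:R `^ (1 - 2 / q) *
    (normqq q (restrict (~: T0 s sigma) (D^T *m h)) +
     L `^ (q / 2) * a%:R `^ (1 - q / 2) * normqq q (A *m h) / (1 + delta_a)) `^ (2 / q)).
Proof.
move=> q_gt0 q_le1 L_gt0 frameD a_gt0 RIPsa RIPa delta_sa_lt1 sorted.
have T01_bound := normqq_ADdag_T01_le s q_gt0 q_le1 L_gt0 frameD a_gt0 RIPa sorted.
have [/andP[delta_a_ge0 _] _] := RIPa.
set x := D^T *m h in T01_bound *; set w := restrict _ x in T01_bound *.
set N := norm2 (Ddag D *m w); set Delta := (1 + delta_a) / (1 - delta_sa).
set X := normqq q (restrict (~: T0 s sigma) x) in T01_bound *.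
set Y := normqq q (A *m h) in T01_bound *.
set alpha := a%:R `^ (q / 2 - 1) in T01_bound *; set K := X + _.
have RIP_lower : (1 - delta_sa) * N `^ q <= normqq q (A *m (Ddag D *m w)).
  by case: RIPsa => _ /(_ w (sparse_restrict x (card_T01 s sigma a_gt0))) /andP[].
have alpha_inv : alpha * a%:R `^ (1 - q / 2) = 1.
  rewrite -powRD ?pnatr_eq0 -?lt0n ?a_gt0 ?implybT //.
  by rewrite (_ : _ + _ = 0) ?powRr0 //; ring.
have Nq_le : L `^ (q / 2) * N `^ q <= Delta * alpha * K.
  have -> : Delta * alpha * K =
      ((1 + delta_a) * alpha * X + L `^ (q / 2) * (alpha * a%:R `^ (1 - q / 2)) * Y) /
      (1 - delta_sa).
    by rewrite /Delta /K; field; rewrite !gt_eqF //; lra.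
  rewrite alpha_inv mulr1 ler_pdivlMr ?subr_gt0 //.
  have := ler_wpM2l (powR_ge0 L (q / 2)) RIP_lower; nra.
apply: (sqr_le_of_powR_le q_gt0 L_gt0 (norm2_ge0 _) _ _ Nq_le).
  by rewrite /Delta divr_ge0 //; lra.
apply: addr_ge0; first exact: normqq_ge0.
by apply: divr_ge0; [rewrite !mulr_ge0 ?powR_ge0 ?normqq_ge0 | lra].
Qed.

Unset Implicit Arguments.

Theorem lemma2p6 (R : realType) (m n d : nat) (q L U : R)
    (D : 'M[R]_(n, d)) (A : 'M[R]_(m, n)) (s a : nat) (delta_a delta_sa : R) :
  0 < q -> q <= 1 ->
  0 < L -> L <= U -> is_frame D L U ->
  (0 < s)%N -> (s < a)%N ->
  Dq_RIP A D q (s + a) delta_sa ->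
  Dq_RIP_const A D q a delta_a ->
  Dq_RIP_const A D q (s + a) delta_sa ->
  delta_sa < 1 ->
  forall (h : 'cV[R]_n) (sigma : 'S_d),
    sorting_perm (D^T *m h) sigma ->
    let kappa := U / L in
    let Delta := (1 + delta_a) / (1 - delta_sa) in
    let T := T0 s sigma in
    let T01 := T0 s sigma :|: T1 s a sigma in
    norm2 (D *m ((Dsub D T01)^T *m h)) ^+ 2 <=
      kappa * U * Delta `^ (2 / q) * a%:R `^ (1 - 2 / q) *
      (normqq q ((Dsub D (~: T))^T *m h) +
       L `^ (q / 2) * a%:R `^ (1 - q / 2) * normqq q (A *m h) / (1 + delta_a))
        `^ (2 / q).
Proof.
move=> q_gt0 q_le1 L_gt0 L_le_U frameD s_gt0 s_lt_a RIPsa [RIPa _] _ delta_sa_lt1 h sigma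
  sorted; cbv zeta.
have a_gt0 : (0 < a)%N := leq_trans s_gt0 (ltnW s_lt_a).
have U_gt0 : 0 < U := lt_le_trans L_gt0 L_le_U.
rewrite !trmx_Dsub_mulmx.
apply: le_trans (norm2_mulmx_le_Ddag L_gt0 frameD _ U_gt0) _.
have T01_bound :=
  norm2_Ddag_T01_le q_gt0 q_le1 L_gt0 frameD a_gt0 RIPsa RIPa delta_sa_lt1 sorted.
apply: le_trans (ler_wpM2l (sqr_ge0 U) T01_bound) _.
by rewrite le_eqVlt; apply/orP; left; apply/eqP; ring.
Qed.
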